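(* Let $\Omega$ be a finite nonempty set, $\mathcal{A}=2^\Omega$, let $\phi$ be a coevent on $\mathcal{A}$ and let $\mu$ be a $q$-measure on $\mathcal{A}$. If $\mu$ 1-generates $\phi$ and $\mu(\Omega)\neq 0$, then $\mu$ actualizes $\phi$.
   Context: Let $\Omega$ be a finite nonempty set and $\mathcal{A}=2^\Omega$. A coevent is a map $\phi:\mathcal{A}\to\{0,1\}$ with $\phi(\emptyset)=0$. For $f:\Omega\to[0,\infty)$ and a coevent $\phi$, the $q$-integral is $\int f\,d\phi=\int_0^\infty \phi(\{\omega\in\Omega: f(\omega)>\lambda\})\,d\lambda$ (Lebesgue measure in $\lambda$), and for $A\in\mathcal{A}$, $\int_A f\,d\phi=\int f\chi_A\,d\phi$ where $\chi_A$ is the indicator function of $A$. A $q$-measure is a map $\mu:\mathcal{A}\to[0,\infty)$ such that for all pairwise disjoint $A,B,C\in\mathcal{A}$: $\mu(A\cup B\cup C)=\mu(A\cup B)+\mu(A\cup C)+\mu(B\cup C)-\mu(A)-\mu(B)-\mu(C)$. The $q$-measure $\mu$ 1-generates $\phi$ if there is a function $f:\Omega\to(0,\infty)$ with $\mu(A)=\int_A f\,d\phi$ for all $A\in\mathcal{A}$. The $q$-measure $\mu$ actualizes $\phi$ if there is a symmetric function $f:\Omega\times\Omega\to(0,\infty)$ (i.e. $f(\omega,\omega')=f(\omega',\omega)$) such that for all $A\in\mathcal{A}$, $\mu(A)=\int g_A\,d\phi$, where $g_A:\Omega\to[0,\infty)$ is defined by $g_A(\omega')=\int_A f(\cdot,\omega')\,d\phi$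 (the $q$-integral over $A$ of $\omega\mapsto f(\omega,\omega')$). *)

From mathcomp Require Import all_boot.
From Stdlib Require Import Reals.
Set Implicit Arguments. Unset Strict Implicit.

Local Open Scope R_scope.

(* A coevent phi : 2^Omega -> {0,1} is represented as a boolean-valued
   map on {set Omega} with phi set0 = false; its real value is coev_val. *)
Definition coevent (Omega : finType) (phi : {set Omega} -> bool) : Prop :=
  phi set0 = false.

Definition coev_val (Omega : finType) (phi : {set Omega} -> bool)
  (A : {set Omega}) : R := if phi A then 1 else 0.

Definition chi (Omega : finType) (A : {set Omega}) (w : Omega) : R :=
  if w \in A then 1 else 0.

Definition upper_set (Omega : finType) (f : Omega -> R) (l : R) : {set Omega} :=
  [set w | if Rlt_dec l (f w) then true else false].

(* is_qint phi f r : the q-integral  int_0^oo phi({f > l}) dl  equals r.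
   Since the integrand is a step function vanishing for l >= max f, the
   Lebesgue integral over [0,oo) is the Riemann integral over [0,M] for any
   M bounding f. *)
Definition is_qint (Omega : finType) (phi : {set Omega} -> bool)
  (f : Omega -> R) (r : R) : Prop :=
  exists M : R, 0 <= M /\ (forall w, f w <= M) /\
    exists pr : Riemann_integrable
                  (fun l => coev_val phi (upper_set f l)) 0 M,
      RiemannInt pr = r.

Definition q_measure (Omega : finType) (mu : {set Omega} -> R) : Prop :=
  (forall A, 0 <= mu A) /\
  (forall A B C : {set Omega},
     A :&: B = set0 -> A :&: C = set0 -> B :&: C = set0 ->
     mu (A :|: B :|: C) =
       mu (A :|: B) + mu (A :|: C) + mu (B :|: C) - mu A - mu B - mu C).

Definition one_generates (Omega : finType) (mu : {set Omega} -> R)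
  (phi : {set Omega} -> bool) : Prop :=
  exists f : Omega -> R, (forall w, 0 < f w) /\
    forall A : {set Omega}, is_qint phi (fun w => f w * chi A w) (mu A).

Definition actualizes (Omega : finType) (mu : {set Omega} -> R)
  (phi : {set Omega} -> bool) : Prop :=
  exists f : Omega -> Omega -> R,
    (forall w w', 0 < f w w') /\ (forall w w', f w w' = f w' w) /\
    forall A : {set Omega}, exists g : Omega -> R,
      (forall w', is_qint phi (fun w => f w w' * chi A w) (g w')) /\
      is_qint phi g (mu A).

(** The kernel [f w * f w' / mu Omega] actualizes [phi]: as the q-integral is positively
    homogeneous, its inner integrals are [g_A w' = f w' * mu A / mu Omega], a positive
    multiple of [f], whose q-integral is again [mu A]. Homogeneity comes from the
    dilation [l -> c * l] of the integration variable, which scales a Riemann integral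
    by [c]. *)
From mathcomp Require Import all_boot.
From Stdlib Require Import Reals Lra FunctionalExtensionality.
From Coquelicot Require Import Coquelicot.

Set Implicit Arguments.
Unset Strict Implicit.

Local Open Scope R_scope.

Lemma RiemannInt_dilate (f : R -> R) (a b c : R) (pr : Riemann_integrable f a b)
    (c_gt0 : 0 < c) :
  exists pr' : Riemann_integrable (fun t => f (t / c)) (c * a) (c * b),
    RiemannInt pr' = c * RiemannInt pr.
Proof.
have int_f : is_RInt f (/ c * (c * a) + 0) (/ c * (c * b) + 0) (RiemannInt pr).
  rewrite -RInt_Reals.
  have -> : / c * (c * a) + 0 = a by field; lra.
  have -> : / c * (c * b) + 0 = b by field; lra.
  exact/RInt_correct/ex_RInt_Reals_1.
have /(is_RInt_scal _ _ _ c) int_dilate := is_RInt_comp_lin _ _ _ _ _ _ int_f.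
have {}int_dilate : is_RInt (fun t => f (t / c)) (c * a) (c * b) (c * RiemannInt pr).
  apply: is_RInt_ext int_dilate => t _.
  rewrite /scal /= /mult /= Rplus_0_r -Rmult_assoc Rinv_r; last lra.
  by rewrite Rmult_1_l Rmult_comm.
exists (ex_RInt_Reals_0 _ _ _ (ex_intro _ _ int_dilate)).
by rewrite -RInt_Reals; apply: is_RInt_unique.
Qed.

Section QIntegral.
Variables (Omega : finType) (phi : {set Omega} -> bool).

Lemma is_qint_ext (h1 h2 : Omega -> R) (r : R) :
  (forall w, h1 w = h2 w) -> is_qint phi h1 r -> is_qint phi h2 r.
Proof. by move=> /functional_extensionality ->. Qed.

Lemma is_qint0 : is_qint phi (fun _ => 0) 0.
Proof.
exists 0; split; first lra; split; first by move=> _; lra.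
by exists (RiemannInt_P7 _ 0); apply: RiemannInt_P9.
Qed.

Lemma upper_set_scale (h : Omega -> R) (c l : R) (c_gt0 : 0 < c) :
  upper_set (fun w => c * h w) l = upper_set h (l / c).
Proof.
apply/setP=> w; rewrite !inE.
have scale_lt : (l < c * h w) <-> (l / c < h w).
  have cancel_c : c * (l / c) = l by field; lra.
  split=> lt.
  - by apply: (Rmult_lt_reg_l c) => //; rewrite cancel_c.
  - by have := Rmult_lt_compat_l c _ _ c_gt0 lt; rewrite cancel_c.
by do 2 case: Rlt_dec => //=; tauto.
Qed.

Lemma is_qint_scale (h : Omega -> R) (c r : R) (c_ge0 : 0 <= c) :
  is_qint phi h r -> is_qint phi (fun w => c * h w) (c * r).
Proof.
case: (Req_dec c 0) => [-> _ | c_neq0 [M [M_ge0 [h_le_M [pr <-]]]]].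
  by rewrite Rmult_0_l; apply: is_qint_ext is_qint0 => w; rewrite Rmult_0_l.
have c_gt0 : 0 < c by lra.
have [pr' int_pr'] := RiemannInt_dilate pr c_gt0.
exists (c * M); split; first exact: Rmult_le_pos.
split; first by move=> w; apply: Rmult_le_compat_l.
rewrite Rmult_0_r in pr' int_pr'.
have level_sets : (fun l => coev_val phi (upper_set (fun w => c * h w) l)) =
                  (fun l => coev_val phi (upper_set h (l / c))).
  by apply: functional_extensionality => l; rewrite upper_set_scale.
by rewrite level_sets; exists pr'.
Qed.

End QIntegral.

Local Close Scope R_scope.

Theorem theorem3p1 (Omega : finType) (HOmega : (0 < #|Omega|)%N)
  (phi : {set Omega} -> bool) (mu : {set Omega} -> R) :
  coevent phi -> q_measure mu -> one_generates mu phi ->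
  mu [set: Omega] <> 0%R -> actualizes mu phi.
Proof.
Local Open Scope R_scope.
move=> _ [mu_ge0 _] [f [f_gt0 int_f]] mu_neq0.
set m := mu [set: Omega].
have m_gt0 : 0 < m by case: (mu_ge0 [set: Omega]) => // /esym /mu_neq0.
exists (fun w w' => f w * f w' / m); split; last split.
- by move=> w w'; apply: Rdiv_lt_0_compat => //; apply: Rmult_lt_0_compat.
- by move=> w w'; rewrite (Rmult_comm (f w)).
move=> A; exists (fun w' => f w' / m * mu A); split.
- move=> w'.
  have coef_ge0 : 0 <= f w' / m by apply/Rlt_le/Rdiv_lt_0_compat.
  apply: is_qint_ext (is_qint_scale coef_ge0 (int_f A)) => w.
  by field; lra.
- have coef_ge0 : 0 <= mu A / m by apply: Rdiv_le_0_compat.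
  have := is_qint_scale coef_ge0 (int_f [set: Omega]).
  rewrite -/m (_ : mu A / m * m = mu A); last by field; lra.
  by apply: is_qint_ext => w; rewrite /chi in_setT; field; lra.
Qed.
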